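(* Let $G=(V,E)$ be a finite simple graph with at least one vertex, and let $r$ be the largest eigenvalue of the adjacency matrix of its connection graph $G'$. Then the spectral radius $\rho$ of the Hodge Laplacian $H=(d+d^T)^2$ of $G$ satisfies $$\rho \le (1+r) - \frac{1}{1+r}.$$
   Context: Let $G=(V,E)$ be a finite simple graph. Its associated $1$-dimensional simplicial complex is the set of simplices $X=\{\{v\}: v\in V\}\cup E$, where each edge is regarded as a $2$-element subset of $V$; put $N=|V|+|E|$ and index $N\times N$ matrices by $X$. The connection graph $G'$ has vertex set $X$, and two distinct $x,y\in X$ are adjacent iff $x\cap y\neq\emptyset$. For the Hodge Laplacian, fix an orientation of each edge; for an edge $x=\{a,b\}$ oriented from $a$ to $b$ set $d(x,\{a\})=-1$, $d(x,\{b\})=1$, and let all other entries of $d$ be $0$. The Hodge Laplacian is $H=(d+d^T)^2$; it is the direct sum of the Kirchhoff Laplacian $H_0$ (on vertices) and the $1$-form Laplacian $H_1$ (on edges), and its spectrum does not depend on the chosen orientation. *)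

From HB Require Import structures.
From mathcomp Require Import all_boot all_order all_algebra.
Set Implicit Arguments. Unset Strict Implicit. Unset Printing Implicit Defensive.
Import Order.TTheory GRing.Theory Num.Theory.
Local Open Scope ring_scope.

(* A finite simple graph is a symmetric irreflexive relation e on a finType V;
   its edges are the 2-element sets {x,y} with e x y. *)
Definition simple_graph (V : finType) (e : rel V) : Prop :=
  symmetric e /\ irreflexive e.

Definition is_simplex (V : finType) (e : rel V) (A : {set V}) : bool :=
  (#|A| == 1)%N || [exists x, exists y, e x y && (A == [set x; y])].

Definition simplices (V : finType) (e : rel V) : {set {set V}} :=
  [set A | is_simplex e A].

(* N = |V| + |E|, simplices enumerated by 'I_N *)
Definition nsimp (V : finType) (e : rel V) : nat := #|simplices e|.

Definition sx (V : finType) (e : rel V) (i : 'I_(nsimp e)) : {set V} :=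
  @enum_val _ (mem (simplices e)) i.

Definition conn_adj (R : pzRingType) (V : finType) (e : rel V) : 'M[R]_(nsimp e) :=
  \matrix_(i, j) ((i != j) && (sx i :&: sx j != set0))%:R.

(* Orientation: an edge is oriented towards its vertex of larger enum_rank. *)
Definition edge_head (V : finType) (x : {set V}) (v : V) : bool :=
  (v \in x) && [forall w in x, (enum_rank w <= enum_rank v)%N].

(* Exterior derivative d (entries d(x,{v})), with d(x,{a}) = -1, d(x,{b}) = 1
   for the edge x oriented from a to b. *)
Definition dmat (R : pzRingType) (V : finType) (e : rel V) : 'M[R]_(nsimp e) :=
  \matrix_(i, j)
    if (#|sx i| == 2)%N && [exists v, (sx j == [set v]) && (v \in sx i)] then
      (if [exists v, (sx j == [set v]) && edge_head (sx i) v] then 1 else -1)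
    else 0.

Definition hodge (R : pzRingType) (V : finType) (e : rel V) : 'M[R]_(nsimp e) :=
  let D := dmat R e + (dmat R e)^T in D *m D.

From HB Require Import structures.
From mathcomp Require Import all_boot all_order all_algebra.
From mathcomp Require Import complex ring lra.
Set Implicit Arguments. Unset Strict Implicit. Unset Printing Implicit Defensive.
Import Order.TTheory GRing.Theory Num.Theory.
Local Open Scope ring_scope.

(* Write D = d + d^T for the Dirac operator and P for the
   projection onto edges, so that H = D^2 and P D = D (1 - P).  The matrix
   M = D + P (D^2 - 2) is a signed connection adjacency matrix: its entries
   are bounded in absolute value by those of the adjacency matrix A of G', so
   x M x^T <= |x| A |x|^T <= r |x|^2.  If y is a vertex eigenvector of H with
   eigenvalue k and w = y D, then for x = s y + w both x M x^T and |x|^2 are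
   explicit in s and k; optimising over s gives k <= (1 + r) - 1/(1 + r).
   Every eigenvalue of H is the eigenvalue of such a vertex eigenvector
   (D maps edge eigenvectors to vertex eigenvectors), or is 0. *)

Section QuadraticForms.
Variable R : realDomainType.

Lemma mx_quadE n (x : 'rV[R]_n) (B : 'M[R]_n) :
  (x *m B *m x^T) 0 0 = \sum_i \sum_j x 0 i * B i j * x 0 j.
Proof.
rewrite mxE; under eq_bigr do rewrite !mxE mulr_suml.
by rewrite exchange_big.
Qed.

Lemma mx_quad_le_norm n (x : 'rV[R]_n) (B A : 'M[R]_n) :
  (forall i j, `|B i j| <= A i j) ->
  (x *m B *m x^T) 0 0 <= (map_mx Num.norm x *m A *m (map_mx Num.norm x)^T) 0 0.
Proof.
move=> leBA; rewrite !mx_quadE; apply: ler_sum => i _; apply: ler_sum => j _.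
rewrite !mxE; apply: le_trans (ler_norm _) _.
by rewrite !normrM ler_wpM2r // ler_wpM2l.
Qed.

Lemma mx_normsq_norm n (x : 'rV[R]_n) :
  (map_mx Num.norm x *m (map_mx Num.norm x)^T) 0 0 = (x *m x^T) 0 0.
Proof.
rewrite !mxE; apply: eq_bigr => i _.
by rewrite !mxE -normrM ger0_norm // -expr2 sqr_ge0.
Qed.

Lemma mx_normsq_ge0 n (x : 'rV[R]_n) : 0 <= (x *m x^T) 0 0.
Proof. by rewrite mxE; apply: sumr_ge0 => i _; rewrite !mxE -expr2 sqr_ge0. Qed.

Lemma mx_normsq_gt0 n (x : 'rV[R]_n) : x != 0 -> 0 < (x *m x^T) 0 0.
Proof.
move=> x_neq0; have [i xi_neq0] : exists i, x 0 i != 0.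
  apply/existsP; apply: contraNT x_neq0; rewrite negb_exists => /forallP x0.
  by apply/eqP/rowP => i; rewrite mxE; apply/eqP/negPn.
rewrite mxE (bigD1 i) //= ltr_pwDl //; first by rewrite !mxE -expr2 exprn_even_gt0.
by apply: sumr_ge0 => j _; rewrite !mxE -expr2 sqr_ge0.
Qed.

End QuadraticForms.

Section Rayleigh.
Local Open Scope sesquilinear_scope.
Variables (R : rcfType) (n : nat) (A : 'M[R]_n) (r : R).
Hypotheses (A_sym : A^T = A) (le_eigen : forall l, eigenvalue A l -> l <= r).
Local Notation toC := (real_complex R).

(* Diagonalise the complexification of A by a unitary matrix. *)
Lemma mx_quad_le_max_eigenvalue (x : 'rV[R]_n) :
  (x *m A *m x^T) 0 0 <= r * (x *m x^T) 0 0.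
Proof.
pose Ac := map_mx toC A.
have Ac_herm : Ac \is hermsymmx.
  apply: realsym_hermsym; last by apply/mxOverP => i j; rewrite mxE complex_real.
  by apply/is_hermitianmxP; rewrite expr0 scale1r map_mx_id // /Ac map_trmx A_sym.
have /hermitian_normalmx /orthomx_spectralP AcE := Ac_herm.
set P := spectralmx Ac in AcE; set sd := spectral_diag Ac in AcE.
have P_unitary : P \is unitarymx by apply: spectral_unitarymx.
have P_unit : P \in unitmx by apply: spectral_unit.
have eigen_toC a : eigenvalue Ac (toC a) -> eigenvalue A a.
  by rewrite !eigenvalue_root_char -map_char_poly fmorph_root.
have le_sd j : sd 0 j <= toC r.
  have /complex_realP [a sdE] := mxOverP (hermitian_spectral_diag_real Ac_herm) 0 j.
  rewrite sdE lecR; apply/le_eigen/eigen_toC; rewrite -sdE.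
  apply/eigenvalueP; exists (row j P).
    have PAc : P *m Ac = diag_mx sd *m P by rewrite AcE !mulmxA mulmxV // mul1mx.
    by rewrite -row_mul PAc; apply/rowP => k; rewrite mul_diag_mx !mxE.
  rewrite rowE mulmx_free_eq0 ?row_free_unit //.
  by apply/eqP => /matrixP /(_ 0 j) /eqP; rewrite !mxE !eqxx oner_eq0.
pose xc := map_mx toC x; pose z := xc *m P^t*.
have xc_adj : xc^t* = xc^T.
  by apply/matrixP => i j; rewrite !mxE; apply/CrealP; rewrite complex_real.
have quadE : toC ((x *m A *m x^T) 0 0) = (z *m diag_mx sd *m z^t*) 0 0.
  transitivity ((map_mx toC (x *m A *m x^T)) 0 0); first by rewrite [RHS]mxE.
  rewrite !map_mxM -map_trmx -/xc -/Ac AcE invmx_unitary //.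
  by rewrite /z trmx_mul map_mxM trmxCK xc_adj !mulmxA.
have normsqE : toC ((x *m x^T) 0 0) = (z *m z^t*) 0 0.
  transitivity ((map_mx toC (x *m x^T)) 0 0); first by rewrite [RHS]mxE.
  rewrite map_mxM -map_trmx -/xc /z trmx_mul map_mxM trmxCK xc_adj.
  by rewrite mulmxA -(mulmxA xc) -invmx_unitary // mulVmx // mulmx1.
rewrite -lecR rmorphM /= normsqE quadE mul_mx_diag !mxE mulr_sumr.
apply: ler_sum => j _; rewrite !mxE mulrAC [X in _ <= X]mulrC.
by rewrite ler_wpM2l ?le_sd // mul_conjC_ge0.
Qed.

Lemma mx_diag_le_max_eigenvalue (i : 'I_n) : A i i <= r.
Proof.
have := mx_quad_le_max_eigenvalue (delta_mx 0 i).
by rewrite -rowE trmx_delta -colE mul_delta_mx !mxE !eqxx mulr1.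
Qed.

End Rayleigh.

Section ConnectionGraph.
Variables (R : numDomainType) (V : finType) (e : rel V).
Local Notation N := (nsimp e).
Local Notation d := (dmat R e).
Local Notation A := (conn_adj R e).

Definition is_edge (i : 'I_N) : bool := (#|sx i| == 2)%N.

Definition incident (i j : 'I_N) : bool :=
  is_edge i && [exists v, (sx j == [set v]) && (v \in sx i)].

Lemma dmat_eq0 i j : ~~ incident i j -> d i j = 0.
Proof. by rewrite mxE /incident => /negbTE ->. Qed.

Lemma normr_dmat i j : `|d i j| = (incident i j)%:R.
Proof.
rewrite mxE /incident; case: ifP => _; last by rewrite normr0.
by case: ifP; rewrite ?normrN normr1.
Qed.

Lemma dmat_sqr i j : d i j * d i j = (incident i j)%:R.
Proof.
rewrite mxE /incident; case: ifP => _; last by rewrite mulr0.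
by case: ifP; rewrite ?mulrNN mulr1.
Qed.

Lemma incident_is_edge i j : incident i j -> is_edge i && ~~ is_edge j.
Proof.
by case/andP => -> /existsP [v /andP [/eqP sx_j _]]; rewrite /is_edge sx_j cards1.
Qed.

Lemma conn_adj_incident i j : incident i j -> A i j = 1.
Proof.
move=> ij; have /andP [i_edge j_vertex] := incident_is_edge ij.
case/andP: ij => _ /existsP [v /andP [/eqP sx_j v_i]].
have i_neq_j : i != j by apply: contraNneq j_vertex => <-.
have meet : sx i :&: sx j != set0.
  by apply/set0Pn; exists v; rewrite inE v_i sx_j set11.
by rewrite mxE i_neq_j meet.
Qed.

Lemma sx_inj : injective (@sx V e).
Proof. exact: enum_val_inj. Qed.

Lemma simplices_set1 v : [set v] \in simplices e.
Proof. by rewrite inE /is_simplex cards1. Qed.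

Definition vertex_simplex (v : V) : 'I_N := enum_rank_in (simplices_set1 v) [set v].

Lemma sx_vertex_simplex v : sx (vertex_simplex v) = [set v].
Proof. exact: (enum_rankK_in (simplices_set1 v) (simplices_set1 v)). Qed.

Lemma card_vertex_simplices (S : {set V}) :
  #|[set k : 'I_N | [exists v, (sx k == [set v]) && (v \in S)]]| = #|S|.
Proof.
have -> : [set k : 'I_N | [exists v, (sx k == [set v]) && (v \in S)]] =
    vertex_simplex @: S.
  apply/setP => k; rewrite inE; apply/existsP/imsetP => [[v /andP [/eqP sx_k v_S]]|].
    by exists v => //; apply: sx_inj; rewrite sx_vertex_simplex.
  by case=> v v_S ->; exists v; rewrite sx_vertex_simplex eqxx.
apply: card_imset => v w /(congr1 (@sx _ e)).
by rewrite !sx_vertex_simplex => /set1_inj.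
Qed.

Lemma conn_adj_sym : A^T = A.
Proof. by apply/matrixP => i j; rewrite !mxE eq_sym setIC. Qed.

Definition dirac : 'M[R]_N := locked (d + d^T).

Lemma diracE i j : dirac i j = d i j + d j i.
Proof. by rewrite /dirac -lock !mxE. Qed.

Lemma dirac_sym : dirac^T = dirac.
Proof. by rewrite /dirac -lock linearD /= trmxK addrC. Qed.

Lemma hodgeE : hodge R e = dirac *m dirac.
Proof. by rewrite /dirac -lock. Qed.

Lemma dirac_is_edge i j : dirac i j != 0 -> is_edge i != is_edge j.
Proof.
rewrite diracE; have [ij|nij] := boolP (incident i j).
  by have /andP [-> /negbTE ->] := incident_is_edge ij.
have [ji|nji] := boolP (incident j i).
  by have /andP [-> /negbTE ->] := incident_is_edge ji.
by rewrite !dmat_eq0 // addr0 eqxx.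
Qed.

Lemma dirac_diag i : dirac i i = 0.
Proof. by apply/eqP/negPn/negP => /dirac_is_edge; rewrite eqxx. Qed.

Lemma normr_dirac_le i j : `|dirac i j| <= A i j.
Proof.
rewrite diracE; have [ij|nij] := boolP (incident i j).
  have /andP [_ j_vertex] := incident_is_edge ij.
  have nji : ~~ incident j i by apply: contraNN j_vertex => /incident_is_edge /andP [].
  by rewrite (dmat_eq0 nji) addr0 normr_dmat ij conn_adj_incident.
have [ji|nji] := boolP (incident j i); last by rewrite !dmat_eq0 // addr0 normr0 mxE.
rewrite (dmat_eq0 nij) add0r normr_dmat ji /= mxE eq_sym setIC.
by have := conn_adj_incident ji; rewrite mxE => ->.
Qed.

Lemma hodge_mixed i j : is_edge i -> ~~ is_edge j -> (dirac *m dirac) i j = 0.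
Proof.
move=> i_edge j_vertex; rewrite mxE big1 // => k _.
have [->|ik] := eqVneq (dirac i k) 0; first by rewrite mul0r.
have k_vertex : ~~ is_edge k by move: (dirac_is_edge ik); rewrite i_edge; case: (is_edge k).
have [->|kj] := eqVneq (dirac k j) 0; first by rewrite mulr0.
by move: (dirac_is_edge kj); rewrite (negbTE k_vertex) (negbTE j_vertex).
Qed.

Lemma hodge_edgeE i j : is_edge i -> is_edge j ->
  (dirac *m dirac) i j = \sum_k d i k * d j k.
Proof.
move=> i_edge j_edge; rewrite mxE; apply: eq_bigr => k _; rewrite !diracE.
have vertex_not_incident l : is_edge l -> ~~ incident k l.
  by move=> l_edge; apply/negP => /incident_is_edge /andP [_]; rewrite l_edge.
rewrite (dmat_eq0 (vertex_not_incident i i_edge)).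
by rewrite (dmat_eq0 (vertex_not_incident j j_edge)) addr0 add0r.
Qed.

Lemma incident2 i j k : is_edge i -> is_edge j ->
  incident i k && incident j k =
  [exists v, (sx k == [set v]) && (v \in sx i :&: sx j)].
Proof.
move=> i_edge j_edge; rewrite /incident i_edge j_edge /=.
apply/andP/existsP => [[/existsP [v /andP [/eqP sx_k v_i]]]|].
  move=> /existsP [w /andP [/eqP sx_kw w_j]].
  have vw : v = w by apply/set1_inj; rewrite -sx_k -sx_kw.
  by exists w; rewrite sx_kw eqxx inE -vw v_i vw w_j.
case=> v /andP [/eqP sx_k]; rewrite inE => /andP [v_i v_j].
by split; apply/existsP; exists v; rewrite sx_k eqxx.
Qed.

Lemma sum_incident2 i j : is_edge i -> is_edge j ->
  \sum_k ((incident i k && incident j k)%:R : R) = #|sx i :&: sx j|%:R.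
Proof.
move=> i_edge j_edge; rewrite -card_vertex_simplices -sum1_card natr_sum [RHS]big_mkcond.
by apply: eq_bigr => k _; rewrite inE incident2 //; case: ifP.
Qed.

Lemma normr_hodge_edge_le i j : is_edge i -> is_edge j ->
  `|(dirac *m dirac) i j| <= #|sx i :&: sx j|%:R.
Proof.
move=> i_edge j_edge; rewrite hodge_edgeE // -sum_incident2 //.
apply: le_trans (ler_norm_sum _ _ _) _; apply: ler_sum => k _.
by rewrite normrM !normr_dmat -natrM mulnb.
Qed.

Lemma hodge_edge_diag i : is_edge i -> (dirac *m dirac) i i = 2%:R.
Proof.
move=> i_edge; rewrite hodge_edgeE //.
under eq_bigr do rewrite dmat_sqr -[incident i _]andbb.
by rewrite sum_incident2 // setIid (eqP i_edge).
Qed.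

Lemma card_edge_meet_le1 i j : is_edge i -> is_edge j -> i != j ->
  (#|sx i :&: sx j| <= 1)%N.
Proof.
move=> i_edge j_edge; apply: contraNT; rewrite -ltnNge => meet2.
have cardI : #|sx i :&: sx j| = 2%N.
  by apply/eqP; rewrite eqn_leq meet2 -(eqP i_edge) subset_leq_card ?subsetIl.
have sxI_i : sx i :&: sx j = sx i by apply/eqP; rewrite eqEcard subsetIl cardI (eqP i_edge).
have sxI_j : sx i :&: sx j = sx j by apply/eqP; rewrite eqEcard subsetIr cardI (eqP j_edge).
by apply/eqP/sx_inj; rewrite -sxI_i sxI_j.
Qed.

Definition edge_proj : 'M[R]_N := diag_mx (\row_i (is_edge i)%:R).

(* It is [A] up to the signs of its entries; only [`|_| <= A] is needed. *)
Definition signed_conn_adj : 'M[R]_N :=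
  dirac + edge_proj *m (dirac *m dirac - 2%:M).

Lemma signed_conn_adjE i j : signed_conn_adj i j =
  dirac i j + (is_edge i)%:R * ((dirac *m dirac) i j - 2%:R *+ (i == j)).
Proof. by rewrite /signed_conn_adj mul_diag_mx !mxE. Qed.

Lemma normr_signed_conn_adj_le i j : `|signed_conn_adj i j| <= A i j.
Proof.
rewrite signed_conn_adjE.
have [<-|i_neq_j] := eqVneq i j.
  rewrite dirac_diag add0r mulr1n [A i i]mxE eqxx /=.
  have [i_edge|i_vertex] := boolP (is_edge i); last by rewrite mul0r normr0.
  by rewrite hodge_edge_diag // subrr mulr0 normr0.
rewrite mulr0n subr0.
have [i_edge|i_vertex] := boolP (is_edge i); last by rewrite mul0r addr0 normr_dirac_le.
have [j_edge|j_vertex] := boolP (is_edge j); last first.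
  by rewrite hodge_mixed // mulr0 addr0 normr_dirac_le.
have -> : dirac i j = 0.
  by apply/eqP/negPn/negP => /dirac_is_edge; rewrite i_edge j_edge.
rewrite add0r mul1r (le_trans (normr_hodge_edge_le i_edge j_edge)) // mxE i_neq_j /=.
have [->|meet] := eqVneq (sx i :&: sx j) set0; first by rewrite cards0.
by rewrite ler_nat card_edge_meet_le1.
Qed.

Lemma edge_proj_sym : edge_proj^T = edge_proj.
Proof. exact: tr_diag_mx. Qed.

Lemma edge_proj_idem : edge_proj *m edge_proj = edge_proj.
Proof.
apply/matrixP => i j; rewrite mul_diag_mx !mxE.
by case: (is_edge i); rewrite ?mul1r ?mul0r ?mul0rn.
Qed.

Lemma edge_proj_dirac : edge_proj *m dirac = dirac *m (1%:M - edge_proj).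
Proof.
apply/matrixP => i j; rewrite mulmxBr mulmx1 mul_diag_mx mul_mx_diag !mxE.
have [->|ij] := eqVneq (dirac i j) 0; first by rewrite !mulr0 !mul0r subr0.
move: (dirac_is_edge ij); case: (is_edge i); case: (is_edge j) => //= _.
  by rewrite mulr0 mul1r subr0.
by rewrite mulr1 mul0r subrr.
Qed.

End ConnectionGraph.

Lemma le_sub_inv_of_ratio_le (R : rcfType) (k r : R) : 0 <= k ->
  (forall s, k * s + (s + k - 2) * k <= r * (s * s + k)) ->
  k <= (1 + r) - (1 + r)^-1.
Proof.
move=> k_ge0 ratio_le.
(* The root [l > 0] of [l - l^-1 = k] and the optimal [s = 1 + l^-1]. *)
pose t := Num.sqrt (k * k + 4).
have t_gt0 : 0 < t by rewrite sqrtr_gt0; nra.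
have tt : t * t = k * k + 4 by rewrite -expr2 sqr_sqrtr //; nra.
pose l := (k + t) / 2.
have l_gt0 : 0 < l by rewrite /l; lra.
have ll : l * l = k * l + 1 by rewrite /l; nra.
pose s := l + 1 - k.
have ratioE : k * s + (s + k - 2) * k = (l - 1) * (s * s + k) by rewrite /s; nra.
have s_gt0 : 0 < s by rewrite /s; nra.
have den_gt0 : 0 < s * s + k by nra.
have l_le : l <= 1 + r.
  have := ratio_le s; rewrite ratioE -subr_ge0 -mulrBl pmulr_lge0 //; lra.
have -> : k = l - l^-1.
  by apply: (mulIf (lt0r_neq0 l_gt0)); rewrite mulrBl mulVf ?lt0r_neq0 //; lra.
by rewrite lerB // lef_pV2 ?posrE //; lra.
Qed.

Section SymmetricSquare.
Variables (R : realFieldType) (n : nat) (D : 'M[R]_n).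
Hypothesis D_sym : D^T = D.

Lemma normsq_mulmx_sym (y : 'rV[R]_n) :
  (y *m D) *m (y *m D)^T = y *m (D *m D) *m y^T.
Proof. by rewrite trmx_mul D_sym !mulmxA. Qed.

Lemma sym_sqr_eigenvector_ge0 (y : 'rV[R]_n) k :
  y != 0 -> y *m (D *m D) = k *: y -> 0 <= k.
Proof.
move=> y_neq0 yDD; have := mx_normsq_ge0 (y *m D).
by rewrite normsq_mulmx_sym yDD -scalemxAl mxE pmulr_lge0 // mx_normsq_gt0.
Qed.

End SymmetricSquare.

Section DiracBound.
Variables (R : rcfType) (n : nat) (D P : 'M[R]_n) (r : R).
Hypotheses (D_sym : D^T = D) (P_sym : P^T = P) (P_idem : P *m P = P).
Hypothesis PD : P *m D = D *m (1%:M - P).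
Local Notation M := (D + P *m (D *m D - 2%:M)).
Hypothesis quad_le : forall x : 'rV[R]_n, (x *m M *m x^T) 0 0 <= r * (x *m x^T) 0 0.

Lemma PD_tr : D *m P = (1%:M - P) *m D.
Proof. by apply: trmx_inj; rewrite !trmx_mul D_sym P_sym linearB /= trmx1 P_sym PD. Qed.

Lemma compl_proj_mul : (1%:M - P) *m P = 0.
Proof. by rewrite mulmxBl mul1mx P_idem subrr. Qed.

Lemma compl_proj_sqr_comm : (1%:M - P) *m (D *m D) = (D *m D) *m (1%:M - P).
Proof.
by rewrite mulmxBl mulmxBr mul1mx mulmx1 mulmxA PD -mulmxA -PD_tr mulmxA.
Qed.

Lemma kerP_eigenvalue_le (y : 'rV[R]_n) k : y != 0 -> y *m P = 0 ->
  y *m (D *m D) = k *: y -> k <= (1 + r) - (1 + r)^-1.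
Proof.
move=> y_neq0 yP yDD; pose w := y *m D.
have k_ge0 : 0 <= k := sym_sqr_eigenvector_ge0 D_sym y_neq0 yDD.
have wP : w *m P = w by rewrite -mulmxA PD_tr mulmxA mulmxBr mulmx1 yP subr0.
have yw : y *m w^T = 0 by rewrite -wP trmx_mul P_sym mulmxA yP mul0mx.
have wy : w *m y^T = 0 by rewrite -(trmxK (w *m y^T)) trmx_mul trmxK yw trmx0.
have ww : w *m w^T = k *: (y *m y^T) by rewrite normsq_mulmx_sym // yDD -scalemxAl.
have wDD : w *m (D *m D) = k *: w by rewrite !mulmxA -(mulmxA y) yDD -scalemxAl.
have cross a b c d : (a *: y + b *: w) *m (c *: y + d *: w)^T =
    (a * c + b * d * k) *: (y *m y^T).
  rewrite linearD /= !linearZ /= !mulmxDl !mulmxDr -!scalemxAl -!scalemxAr.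
  by rewrite yw wy ww !scaler0 addr0 add0r !scalerA -scalerDl.
have yM : y *m M = w by rewrite [y *m _]mulmxDr (mulmxA y P) yP mul0mx addr0.
have wM : w *m M = k *: y + (k - 2) *: w.
  rewrite [w *m _]mulmxDr (mulmxA w P) wP mulmxBr wDD -mulmxA yDD mul_mx_scalar.
  by apply/rowP => i; rewrite !mxE; ring.
apply: le_sub_inv_of_ratio_le => // s.
have xE : s *: y + w = s *: y + 1 *: w by rewrite scale1r.
have := quad_le (s *: y + w).
rewrite mulmxDl -scalemxAl yM wM.
have -> : s *: w + (k *: y + (k - 2) *: w) = k *: y + (s + k - 2) *: w.
  by apply/rowP => i; rewrite !mxE; ring.
have scale00 a : (a *: (y *m y^T)) 0 0 = a * (y *m y^T) 0 0 by rewrite mxE.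
rewrite xE !cross !scale00 mulrA !mulr1 mul1r ler_pM2r //.
exact: mx_normsq_gt0.
Qed.

Hypothesis r_ge0 : 0 <= r.

Lemma sqr_eigenvalue_le rho : eigenvalue (D *m D) rho ->
  `|rho| <= (1 + r) - (1 + r)^-1.
Proof.
case/eigenvalueP => v vDD v_neq0.
rewrite ger0_norm ?(sym_sqr_eigenvector_ge0 D_sym v_neq0 vDD) //.
have [vQ0 | vQ_neq0] := eqVneq (v *m (1%:M - P)) 0; last first.
  apply: (kerP_eigenvalue_le vQ_neq0); first by rewrite -mulmxA compl_proj_mul mulmx0.
  by rewrite -mulmxA compl_proj_sqr_comm mulmxA vDD -scalemxAl.
move/eqP: vQ0; rewrite mulmxBr mulmx1 subr_eq0 => /eqP vP.
have [-> | rho_neq0] := eqVneq rho 0.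
  have le1r : 1 <= 1 + r by rewrite lerDl.
  by rewrite subr_ge0 (le_trans _ le1r) // invf_le1 // (lt_le_trans ltr01).
apply: (kerP_eigenvalue_le (y := v *m D)).
- apply/eqP => vD0; move: (normsq_mulmx_sym D_sym v).
  rewrite vD0 mul0mx vDD -scalemxAl => /matrixP /(_ 0 0).
  rewrite [LHS]mxE [RHS]mxE => /esym /eqP.
  by rewrite mulf_eq0 (negbTE rho_neq0) gt_eqF // mx_normsq_gt0.
- by rewrite {1}vP -(mulmxA v P D) PD -!mulmxA compl_proj_mul !mulmx0.
- by rewrite !mulmxA -(mulmxA v D D) vDD -scalemxAl.
Qed.

End DiracBound.

Theorem mainTheorem3 (R : rcfType) (V : finType) (e : rel V)
  (hG : simple_graph e) (hV : (0 < #|V|)%N) (r : R)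
  (hr : eigenvalue (conn_adj R e) r)
  (hrmax : forall l : R, eigenvalue (conn_adj R e) l -> l <= r) :
  forall rho : R, eigenvalue (hodge R e) rho ->
    `|rho| <= (1 + r) - (1 + r)^-1.
Proof.
have [v0 _] := card_gt0P hV.
have r_ge0 : 0 <= r.
  have := mx_diag_le_max_eigenvalue (conn_adj_sym R e) hrmax (vertex_simplex e v0).
  by rewrite mxE eqxx.
move=> rho; rewrite hodgeE.
apply: (sqr_eigenvalue_le (dirac_sym R e) (edge_proj_sym R e) (edge_proj_idem R e)
  (edge_proj_dirac R e) _ r_ge0) => x.
apply: le_trans (mx_quad_le_norm x (@normr_signed_conn_adj_le R V e)) _.
by rewrite -(mx_normsq_norm x) mx_quad_le_max_eigenvalue // conn_adj_sym.
Qed.
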